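(* Let $p=(p_1(\cdot),\dots,p_N(\cdot))$ and $q=(q_1(\cdot),\dots,q_N(\cdot))$ be growth laws on $\mathcal O_N$, and let $(\eta(t))$, $(\sigma(t))$ be the ordered growth processes with laws $p$ and $q$ respectively. Assume that for all $\eta,\sigma\in\mathcal O_N$ with $\eta\prec\sigma$, $$\sum_{i=1}^k p_i(\eta)\le\sum_{i=1}^k q_i(\sigma)\qquad\text{for all }k=1,\dots,N.$$ Then, whenever $\eta(0),\sigma(0)\in\mathcal O_N$ satisfy $\eta(0)\prec\sigma(0)$, there is a coupling of the two processes such that $\eta(t)\prec\sigma(t)$ for all $t\ge0$.
   Context: $\mathcal O_N$ is the set of $\eta\in\mathbb N^N$ with $\eta_1\ge\dots\ge\eta_N$; for $\sigma\in\mathbb N^N$, $\bar\sigma$ is its nonincreasing rearrangement and $|\sigma|=\sum_i\sigma_i$. For $|\sigma|=|\eta|$, $\eta\prec\sigma$ (equivalently $\sigma\succ\eta$) means $\sum_{i=1}^k\bar\eta_i\le\sum_{i=1}^k\bar\sigma_i$ for all $k=1,\dots,N$. A growth law $p$ assigns to each $\eta\in\mathcal O_N$ a probability vector $(p_1(\eta),\dots,p_N(\eta))$. The ordered growth process with law $p$ is the Markov chain on $\mathcal O_N$ which, from state $\eta$, picks an index $J$ with $P(J=i)=p_i(\eta)$ and moves to $\overline{\eta+e_J}$ (the nonincreasing rearrangement of $\eta$ with one unit added at position $J$). *)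

From HB Require Import structures.
From mathcomp Require Import all_boot all_order all_algebra.
Set Implicit Arguments. Unset Strict Implicit. Unset Printing Implicit Defensive.
Import Order.TTheory GRing.Theory Num.Theory.

(* A configuration in N^N, coordinates indexed by 'I_N (i.e. 0..N-1 for 1..N). *)
Definition config (N : nat) := {ffun 'I_N -> nat}.

Definition ordered N (x : config N) : Prop :=
  forall i j : 'I_N, (i <= j)%N -> (x j <= x i)%N.

Definition rearr N (x : config N) : config N :=
  [ffun i : 'I_N => nth 0%N (sort geq [seq x j | j <- enum 'I_N]) i].

Definition tot N (x : config N) : nat := (\sum_(i < N) x i)%N.

Definition prec N (x y : config N) : Prop :=
  tot x = tot y /\
  forall k, (k <= N)%N ->
    (\sum_(i < N | (i < k)%N) rearr x i <= \sum_(i < N | (i < k)%N) rearr y i)%N.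

Definition step N (x : config N) (i : 'I_N) : config N :=
  rearr [ffun j : 'I_N => (x j + (j == i))%N].

(* A growth law: to each eta in O_N a probability vector (p_1(eta),...,p_N(eta)).
   Values at non-ordered configurations are irrelevant. *)
Definition growth_law (R : realFieldType) N (p : config N -> 'I_N -> R) : Prop :=
  forall x : config N, ordered x ->
    (forall i, (0 <= p x i)%R) /\ (\sum_(i < N) p x i = 1)%R.

(* A Markovian coupling of the two ordered growth processes: from the pair
   state (eta, sigma), the pair of chosen indices (J, J') is drawn with joint
   law K eta sigma, whose marginals are p(eta) and q(sigma); then
   (eta, sigma) moves to (step eta J, step sigma J'). *)
Definition coupling_kernel (R : realFieldType) N
    (p q : config N -> 'I_N -> R)
    (K : config N -> config N -> 'I_N -> 'I_N -> R) : Prop :=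
  forall x y : config N, ordered x -> ordered y ->
    (forall i j, (0 <= K x y i j)%R) /\
    (forall i, (\sum_(j < N) K x y i j = p x i)%R) /\
    (forall j, (\sum_(i < N) K x y i j = q y j)%R).

(* reach K t (x0,y0) (x,y): the coupled chain can be at (x,y) at time t
   with positive probability, starting from (x0,y0). *)
Inductive reach (R : realFieldType) N
    (K : config N -> config N -> 'I_N -> 'I_N -> R)
    (x0 y0 : config N) : nat -> config N -> config N -> Prop :=
| reach0 : reach K x0 y0 0 x0 y0
| reachS : forall t x y i j, reach K x0 y0 t x y -> (0 < K x y i j)%R ->
    reach K x0 y0 t.+1 (step x i) (step y j).

From HB Require Import structures.
From mathcomp Require Import all_boot all_order all_algebra all_fingroup.
From mathcomp Require Import zify lra.
Import Order.TTheory GRing.Theory Num.Theory.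
Set Implicit Arguments. Unset Strict Implicit. Unset Printing Implicit Defensive.

(* Couple the two chains by the quantile coupling: one uniform variable U picks
   J and J' as the indices whose cumulative intervals for p(eta) and q(sigma)
   contain U.  Since the cumulative sums of p(eta) are dominated by those of
   q(sigma), every jump of positive probability has J' <= J.
   Adding a unit at i to an ordered configuration and reordering is the same as
   adding it at the leftmost index s of the block of coordinates equal to eta_i.
   With s <= i and t <= J' <= i the leftmost indices for both chains, the only
   prefix sums at risk are those of length k in (s, t]; equality there would
   propagate, because eta is constant on [s, i], up to length t and force
   sigma_(t-1) = sigma_t, contradicting the choice of t. *)

Lemma perm_map_enum (T : finType) (s : {perm T}) :
  perm_eq [seq s x | x <- enum T] (enum T).
Proof.
apply: uniq_perm; [by rewrite map_inj_uniq ?enum_uniq //; apply: perm_inj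
                  | exact: enum_uniq | move=> a].
rewrite mem_enum; apply/mapP; exists (s^-1 a)%g; first by rewrite mem_enum.
by rewrite permKV.
Qed.

Section Rearrangement.
Variable N : nat.
Implicit Types (x y w : config N) (i j s : 'I_N).

Lemma sorted_ordered w : ordered w -> sorted geq [seq w j | j <- enum 'I_N].
Proof.
move=> Ow; apply: (homo_sorted (e := fun a b : 'I_N => (a <= b)%N)) => [a b|].
  exact: Ow.
by have := iota_sorted 0 N; rewrite -val_enum_ord sorted_map.
Qed.

Lemma rearr_id w : ordered w -> rearr w = w.
Proof.
move=> Ow; apply/ffunP => i; rewrite ffunE sorted_sort; last exact: sorted_ordered.
  by rewrite (nth_map i) ?size_enum_ord // nth_ord_enum.
exact: rev_trans leq_trans.
Qed.

Lemma rearr_permE w (s : {perm 'I_N}) : rearr [ffun j => w (s j)] = rearr w.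
Proof.
apply/ffunP => i; rewrite !ffunE; congr nth; apply/perm_sortP.
- by move=> a b; apply: leq_total.
- exact: rev_trans leq_trans.
- by move=> a b /andP[ab ba]; apply: anti_leq; rewrite [_ && _]andbC; apply/andP.
under eq_map do rewrite ffunE.
by rewrite (map_comp w s); apply: perm_map; apply: perm_map_enum.
Qed.

Definition bump x s : config N := [ffun l => x l + (l == s)]%N.

Lemma bump_ordered x s :
  ordered x -> (forall a : 'I_N, a < s -> x s < x a)%N -> ordered (bump x s).
Proof.
move=> Ox lt_s a b; rewrite !ffunE; case: (eqVneq b s) => [-> | _] ab.
  case: (eqVneq a s) => [-> // | ne_as].
  have : (a < s)%N by rewrite ltn_neqAle ab andbT.
  by move/lt_s; rewrite addn0 addn1.
by rewrite addn0 (leq_trans (Ox a b ab)) ?leq_addr.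
Qed.

Lemma bump_tperm x s i :
  x s = x i -> bump x i = [ffun l => bump x s (tperm s i l)].
Proof.
move=> xsi; apply/ffunP => l; rewrite !ffunE.
case: tpermP => [-> | -> | /eqP/negbTE-> /eqP/negbTE->] //.
  by rewrite xsi eq_sym.
by rewrite !eqxx xsi.
Qed.

Lemma step_leftmost x i : ordered x ->
  exists s, [/\ (s <= i)%N, x s = x i, (forall a : 'I_N, a < s -> x s < x a)%N
              & step x i = bump x s].
Proof.
move=> Ox; case: (@arg_minnP _ i (fun a => x a == x i) val (eqxx _))
  => s /eqP xsi s_min.
have lt_s (a : 'I_N) : (a < s)%N -> (x s < x a)%N.
  move=> a_s; rewrite ltn_neqAle Ox ?(ltnW a_s) // andbT xsi.
  by apply: contraTN a_s => /eqP xia; rewrite -leqNgt s_min // xia.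
exists s; split=> //; first exact: s_min.
rewrite -[step x i]/(rearr (bump x i)) (bump_tperm xsi) rearr_permE rearr_id //.
exact: bump_ordered.
Qed.

Lemma step_ordered x i : ordered x -> ordered (step x i).
Proof.
by move=> Ox; have [s [_ _ lt_s ->]] := step_leftmost i Ox; apply: bump_ordered.
Qed.

Lemma sum_bump x s k :
  (\sum_(l < N | l < k) bump x s l = \sum_(l < N | l < k) x l + (s < k))%N.
Proof.
under eq_bigr do rewrite ffunE.
rewrite big_split /=; congr (_ + _)%N; case: (ltnP s k) => [sk | ks].
  by rewrite (bigD1 s) //= eqxx big1 // => l /andP[_ /negbTE ->].
by rewrite big1 // => l lk; case: eqVneq lk => // ->; rewrite ltnNge ks.
Qed.

Lemma tot_prefix x : tot x = (\sum_(l < N | l < N) x l)%N.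
Proof. by apply: eq_bigl => l; rewrite ltn_ord. Qed.

Lemma prec_ordered x y : ordered x -> ordered y ->
  prec x y <-> tot x = tot y /\ forall k, (k <= N)%N ->
    (\sum_(i < N | i < k) x i <= \sum_(i < N | i < k) y i)%N.
Proof. by move=> Ox Oy; rewrite /prec !rearr_id. Qed.

Definition coord x n := nth 0%N (fgraph x) n.

Lemma coordE x i : coord x i = x i.
Proof. exact: nth_fgraph_ord. Qed.

Lemma sum_coord x k : (k <= N)%N ->
  (\sum_(l < N | l < k) x l = \sum_(l < k) coord x l)%N.
Proof.
move=> kN; rewrite (big_ord_widen N (coord x) kN).
by apply: eq_bigr => l _; rewrite coordE.
Qed.

Lemma coord_nonincr x : ordered x ->
  forall a b, (a <= b)%N -> (b < N)%N -> (coord x b <= coord x a)%N.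
Proof.
move=> Ox a b ab bN; have aN := leq_ltn_trans ab bN.
by rewrite -[a]/(val (Ordinal aN)) -[b]/(val (Ordinal bN)) !coordE; apply: Ox.
Qed.

End Rearrangement.

Section PrefixDominance.
Local Unset Implicit Arguments.
Variables (n : nat) (f g : nat -> nat).
Hypothesis f_nonincr : forall a b, a <= b -> b < n -> f b <= f a.
Hypothesis g_nonincr : forall a b, a <= b -> b < n -> g b <= g a.
Hypothesis f_le_g : forall k, k <= n -> \sum_(l < k) f l <= \sum_(l < k) g l.
Variables s t i : nat.
Hypotheses (i_lt_n : i < n) (s_le_i : s <= i) (f_flat : f s = f i).
Hypotheses (t_le_i : t <= i) (g_drop : 0 < t -> g t < g t.-1).

Local Notation F k := (\sum_(l < k) f l).
Local Notation G k := (\sum_(l < k) g l).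

Lemma prefix_eq_succ m :
  s <= m -> m < t -> F m.+1 = G m.+1 -> g m.+1 = g m /\ F m.+2 = G m.+2.
Proof.
move=> sm mt; rewrite !big_ord_recr /= => Fm1.
have := f_le_g m ltac:(lia); have := f_le_g m.+2 ltac:(lia).
rewrite !big_ord_recr /=.
have := f_nonincr s m ltac:(lia) ltac:(lia).
have := f_nonincr m m.+1 ltac:(lia) ltac:(lia).
have := f_nonincr m.+1 i ltac:(lia) ltac:(lia).
have := g_nonincr m m.+1 ltac:(lia) ltac:(lia).
lia.
Qed.

Lemma prefix_lt k : s < k -> k <= t -> F k < G k.
Proof.
move=> sk kt; rewrite ltn_neqAle f_le_g ?andbT; last by lia.
apply/eqP; move: {2}(t - k) (erefl (t - k)) => d.
elim: d k sk kt => [|d IH] [|m] // e sm mt Fm1.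
  have [gm1 _] := prefix_eq_succ m ltac:(lia) ltac:(lia) Fm1.
  have tm : t = m.+1 by lia.
  by have := g_drop; rewrite tm /= gm1 ltnn => /(_ isT).
have [_ Fm2] := prefix_eq_succ m ltac:(lia) ltac:(lia) Fm1.
by apply: (IH m.+2) Fm2; lia.
Qed.

Lemma bumped_prefix_le k : k <= n -> F k + (s < k) <= G k + (t < k).
Proof.
move=> kn; have := f_le_g k kn.
case: (ltnP s k) => sk; case: (ltnP t k) => tk; rewrite ?addn0 ?addn1 //; try lia.
by rewrite prefix_lt.
Qed.

End PrefixDominance.

Lemma prec_step N (x y : config N) (i j : 'I_N) :
  ordered x -> ordered y -> prec x y -> (j <= i)%N ->
  prec (step x i) (step y j).
Proof.
move=> Ox Oy xy ji.
have [s [si xsi _ ex]] := step_leftmost i Ox.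
have [t [tj _ lt_t ey]] := step_leftmost j Oy.
rewrite (prec_ordered (step_ordered i Ox) (step_ordered j Oy)) ex ey.
move: xy; rewrite prec_ordered // => -[tot_xy le_xy].
split=> [|k kN]; first by rewrite !tot_prefix !sum_bump !ltn_ord -!tot_prefix tot_xy.
rewrite !sum_bump !sum_coord //.
apply: (bumped_prefix_le N (coord x) (coord y) (coord_nonincr Ox)
          (coord_nonincr Oy) _ s t i (ltn_ord i)) => //.
- by move=> k' k'N; rewrite -!sum_coord //; apply: le_xy.
- by rewrite !coordE.
- exact: leq_trans tj ji.
- move=> t_gt0; have t1N : (t.-1 < N)%N by rewrite (leq_ltn_trans (leq_pred t)).
  by rewrite -[t.-1]/(val (Ordinal t1N)) !coordE lt_t //= prednK.
Qed.

Local Open Scope ring_scope.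

Section Overlap.
Variable R : realFieldType.
Implicit Types a b c d t : R.

Definition overlap a b c d := Num.max 0 (Num.min b d - Num.max a c).

Definition clamp a b t := Num.min b (Num.max a t).

Lemma overlapC a b c d : overlap a b c d = overlap c d a b.
Proof. by rewrite /overlap (minC b d) (maxC a c). Qed.

Lemma overlap_ge0 a b c d : 0 <= overlap a b c d.
Proof. by rewrite le_max lexx. Qed.

Lemma overlap_gt0 a b c d : 0 < overlap a b c d -> c < b.
Proof.
by rewrite /overlap lt_max ltxx subr_gt0 gt_max !lt_min => /and3P[].
Qed.

Lemma overlap_clamp a b c d : a <= b -> c <= d ->
  overlap a b c d = clamp a b d - clamp a b c.
Proof.
rewrite /overlap /clamp !maxEle !minEle => ab cd.
by repeat case: ifP => /=; rewrite ?ltNge; move=> *; lra.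
Qed.

Lemma sum_overlap n (Q : nat -> R) a b :
  0 <= a -> a <= b -> b <= 1 -> Q 0%N = 0 -> Q n = 1 ->
  (forall k, Q k <= Q k.+1) ->
  \sum_(j < n) overlap a b (Q j) (Q j.+1) = b - a.
Proof.
move=> a0 ab b1 Q0 Qn Qmono.
rewrite (eq_bigr (fun j : 'I_n => clamp a b (Q j.+1) - clamp a b (Q j)));
  last by move=> j _; rewrite overlap_clamp.
rewrite -(big_mkord xpredT (fun j => clamp a b (Q j.+1) - clamp a b (Q j))).
rewrite telescope_sumr // Qn Q0 /clamp !maxEle !minEle.
by repeat case: ifP => /=; move=> *; lra.
Qed.

End Overlap.

Section Cumsum.
Variables (R : realFieldType) (N : nat) (P : 'I_N -> R).
Hypothesis P_ge0 : forall i, 0 <= P i.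

Definition cumsum k := \sum_(l < N | (l < k)%N) P l.

Lemma cumsum0 : cumsum 0 = 0.
Proof. exact: big_pred0. Qed.

Lemma cumsumN : cumsum N = \sum_(l < N) P l.
Proof. by apply: eq_bigl => l; rewrite ltn_ord. Qed.

Lemma cumsumS (i : 'I_N) : cumsum i.+1 = cumsum i + P i.
Proof.
rewrite /cumsum (bigD1 i) //= addrC; congr (_ + _); apply: eq_bigl => l.
by rewrite ltnS ltn_neqAle andbC.
Qed.

Lemma le_cumsum : {homo cumsum : k k' / (k <= k')%N >-> k <= k'}.
Proof.
move=> k k' kk'; rewrite /cumsum [leRHS](bigID (fun l : 'I_N => (l < k)%N)) /=.
rewrite [X in X + _](eq_bigl (fun l : 'I_N => (l < k)%N)) ?lerDl ?sumr_ge0 //.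
by move=> l; case: (ltnP l k) => [lk|]; rewrite ?andbT ?andbF // (leq_trans lk kk').
Qed.

Lemma cumsum_ge0 k : 0 <= cumsum k.
Proof. by rewrite -cumsum0 le_cumsum. Qed.

End Cumsum.

Section QuantileCoupling.
Variables (R : realFieldType) (N : nat) (P Q : 'I_N -> R).

Definition quantile_coupling (i j : 'I_N) : R :=
  overlap (cumsum P i) (cumsum P i.+1) (cumsum Q j) (cumsum Q j.+1).

Hypotheses (P_ge0 : forall i, 0 <= P i) (P_sum1 : \sum_i P i = 1).
Hypotheses (Q_ge0 : forall j, 0 <= Q j) (Q_sum1 : \sum_j Q j = 1).

Let cumsumPN : cumsum P N = 1. Proof. by rewrite cumsumN. Qed.
Let cumsumQN : cumsum Q N = 1. Proof. by rewrite cumsumN. Qed.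

Lemma sum_quantile_couplingr i : \sum_j quantile_coupling i j = P i.
Proof.
rewrite sum_overlap ?cumsum_ge0 ?le_cumsum ?cumsum0 //.
- by rewrite cumsumS // addrC addKr.
- by rewrite -cumsumPN le_cumsum.
- by move=> k; rewrite le_cumsum.
Qed.

Lemma sum_quantile_couplingl j : \sum_i quantile_coupling i j = Q j.
Proof.
under eq_bigr do rewrite /quantile_coupling overlapC.
rewrite sum_overlap ?cumsum_ge0 ?le_cumsum ?cumsum0 //.
- by rewrite cumsumS // addrC addKr.
- by rewrite -cumsumQN le_cumsum.
- by move=> k; rewrite le_cumsum.
Qed.

Lemma quantile_coupling_gt0_leq i j :
  (forall k, (k <= N)%N -> cumsum P k <= cumsum Q k) ->
  0 < quantile_coupling i j -> (j <= i)%N.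
Proof.
move=> PleQ /overlap_gt0 QjltP; rewrite leqNgt; apply/negP => ij.
have := le_trans (PleQ i.+1 (ltn_ord i)) (le_cumsum Q_ge0 ij).
by rewrite leNgt QjltP.
Qed.

End QuantileCoupling.

Lemma coupling_kernel_quantile (R : realFieldType) N (p q : config N -> 'I_N -> R) :
  growth_law p -> growth_law q ->
  coupling_kernel p q (fun x y => quantile_coupling (p x) (q y)).
Proof.
move=> Gp Gq x y Ox Oy.
have [p_ge0 p_sum1] := Gp x Ox; have [q_ge0 q_sum1] := Gq y Oy.
split=> [i j|]; first exact: overlap_ge0.
by split=> [i|j]; [apply: sum_quantile_couplingr | apply: sum_quantile_couplingl].
Qed.

Theorem proposition3p1 (R : realFieldType) (N : nat)
    (p q : config N -> 'I_N -> R) :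
  growth_law p -> growth_law q ->
  (forall x y : config N, ordered x -> ordered y -> prec x y ->
     forall k, (k <= N)%N ->
       (\sum_(i < N | (i < k)%N) p x i <= \sum_(i < N | (i < k)%N) q y i)%R) ->
  forall x0 y0 : config N, ordered x0 -> ordered y0 -> prec x0 y0 ->
  exists K : config N -> config N -> 'I_N -> 'I_N -> R,
    coupling_kernel p q K /\
    (forall t x y, reach K x0 y0 t x y -> prec x y).
Proof.
move=> Gp Gq dominated x0 y0 Ox0 Oy0 xy0.
exists (fun x y => quantile_coupling (p x) (q y)).
split=> [|t x y reach_xy]; first exact: coupling_kernel_quantile.
suff [] : [/\ ordered x, ordered y & prec x y] by [].
elim: reach_xy => {t x y} [|t x y i j _ [Ox Oy xy] Kij]; first by [].
have [q_ge0 _] := Gq y Oy.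
have ji := quantile_coupling_gt0_leq q_ge0 (dominated x y Ox Oy xy) Kij.
by split; [apply: step_ordered | apply: step_ordered | apply: prec_step].
Qed.
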